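(* Let $\gamma>1$ be a constant, let $\Omega\subset\mathbb{R}^2$ be open, and let $\rho,u,v,p$ be smooth ($C^1$) functions of $(x,y,t)\in\Omega\times[0,T]$ with $\rho>0$ and $p>0$ that satisfy the compressible Euler equations in primitive form \begin{align*} \rho_t + u\rho_x + v\rho_y + \rho(u_x+v_y)&=0,\\ u_t + uu_x + vu_y + p_x/\rho&=0,\\ v_t + uv_x + vv_y + p_y/\rho&=0,\\ p_t + up_x + vp_y + \gamma p(u_x+v_y)&=0. \end{align*} Define $\Phi=(\phi_1,\phi_2,\phi_3,\phi_4)^T=(\sqrt{\rho},\sqrt{\rho}\,u,\sqrt{\rho}\,v,\sqrt{p})^T$ (so $u=\phi_2/\phi_1$, $v=\phi_3/\phi_1$). Then $\Phi$ satisfies $$\Phi_t+(A_1\Phi)_x+A_2\Phi_x+(B_1\Phi)_y+B_2\Phi_y=0,$$ where $$A_1=\frac12\begin{bmatrix}u&0&0&0\\0&u&0&0\\0&0&u&0\\0&2(\gamma-1)\frac{\phi_4}{\phi_1}&0&(2-\gamma)u\end{bmatrix},\quad A_2=\frac12\begin{bmatrix}u&0&0&0\\0&u&0&4\frac{\phi_4}{\phi_1}\\0&0&u&0\\0&0&0&(2-\gamma)u\end{bmatrix},$$ $$B_1=\frac12\begin{bmatrix}v&0&0&0\\0&v&0&0\\0&0&v&0\\0&0&2(\gamma-1)\frac{\phi_4}{\phi_1}&(2-\gamma)v\end{bmatrix},\quad B_2=\frac12\begin{bmatrix}v&0&0&0\\0&v&0&0\\0&0&v&4\frac{\phi_4}{\phi_1}\\0&0&0&(2-\gamma)v\end{bmatrix}.$$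 Moreover, for every constant $\alpha^2>0$ and $P=\mathrm{diag}(\alpha^2,\tfrac{\gamma-1}{2},\tfrac{\gamma-1}{2},1)$, which is symmetric positive definite, one has $PA_2=(PA_1)^T$ and $PB_2=(PB_1)^T$. *)

From Stdlib Require Import Reals Lra.
Open Scope R_scope.

Definition open2 (Om : R -> R -> Prop) : Prop :=
  forall x y, Om x y -> exists r, 0 < r /\
    forall x' y', Rabs (x' - x) < r -> Rabs (y' - y) < r -> Om x' y'.

(* derivative of g at s relative to the set D (D = everything: usual
   derivative; D = [0,T]: one-sided at the endpoints). *)
Definition deriv_within (D : R -> Prop) (g : R -> R) (s l : R) : Prop :=
  forall eps, 0 < eps -> exists delta, 0 < delta /\
    forall h, D h -> h <> s -> Rabs (h - s) < delta ->
      Rabs ((g h - g s) / (h - s) - l) < eps.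

Definition Tint (T : R) : R -> Prop := fun t => 0 <= t <= T.

Definition dom (Om : R -> R -> Prop) (T : R) (x y t : R) : Prop :=
  Om x y /\ 0 <= t <= T.

Definition pd_x (F : R -> R -> R -> R) (x y t l : R) : Prop :=
  deriv_within (fun _ => True) (fun s => F s y t) x l.
Definition pd_y (F : R -> R -> R -> R) (x y t l : R) : Prop :=
  deriv_within (fun _ => True) (fun s => F x s t) y l.
Definition pd_t (T : R) (F : R -> R -> R -> R) (x y t l : R) : Prop :=
  deriv_within (Tint T) (fun s => F x y s) t l.

Definition cont_on (Om : R -> R -> Prop) (T : R) (F : R -> R -> R -> R) : Prop :=
  forall x y t, dom Om T x y t -> forall eps, 0 < eps -> exists delta, 0 < delta /\
    forall x' y' t', dom Om T x' y' t' -> Rabs (x' - x) < delta ->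
      Rabs (y' - y) < delta -> Rabs (t' - t) < delta ->
      Rabs (F x' y' t' - F x y t) < eps.

Definition C1_on (Om : R -> R -> Prop) (T : R) (F Fx Fy Ft : R -> R -> R -> R) : Prop :=
  (forall x y t, dom Om T x y t ->
     pd_x F x y t (Fx x y t) /\ pd_y F x y t (Fy x y t) /\ pd_t T F x y t (Ft x y t))
  /\ cont_on Om T F /\ cont_on Om T Fx /\ cont_on Om T Fy /\ cont_on Om T Ft.

(* 4-vectors and 4x4 matrices, indexed by 0..3 *)
Definition vec4 := nat -> R.
Definition mat4 := nat -> nat -> R.

Definition mxv (A : mat4) (w : vec4) : vec4 :=
  fun i => A i 0%nat * w 0%nat + A i 1%nat * w 1%nat + A i 2%nat * w 2%nat + A i 3%nat * w 3%nat.
Definition mxm (A B : mat4) : mat4 :=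
  fun i j => A i 0%nat * B 0%nat j + A i 1%nat * B 1%nat j + A i 2%nat * B 2%nat j + A i 3%nat * B 3%nat j.
Definition trm (A : mat4) : mat4 := fun i j => A j i.

Definition Phi (rho u v p : R -> R -> R -> R) (x y t : R) : vec4 :=
  fun i => match i with
           | 0%nat => sqrt (rho x y t)
           | 1%nat => sqrt (rho x y t) * u x y t
           | 2%nat => sqrt (rho x y t) * v x y t
           | _ => sqrt (p x y t)
           end.

Definition A1mat (g : R) (f : vec4) : mat4 := fun i j =>
  let u := f 1%nat / f 0%nat in
  / 2 * match i, j with
        | 0%nat, 0%nat => u | 1%nat, 1%nat => u | 2%nat, 2%nat => u
        | 3%nat, 1%nat => 2 * (g - 1) * (f 3%nat / f 0%nat)
        | 3%nat, 3%nat => (2 - g) * u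
        | _, _ => 0 end.
Definition A2mat (g : R) (f : vec4) : mat4 := fun i j =>
  let u := f 1%nat / f 0%nat in
  / 2 * match i, j with
        | 0%nat, 0%nat => u | 1%nat, 1%nat => u | 2%nat, 2%nat => u
        | 1%nat, 3%nat => 4 * (f 3%nat / f 0%nat)
        | 3%nat, 3%nat => (2 - g) * u
        | _, _ => 0 end.
Definition B1mat (g : R) (f : vec4) : mat4 := fun i j =>
  let v := f 2%nat / f 0%nat in
  / 2 * match i, j with
        | 0%nat, 0%nat => v | 1%nat, 1%nat => v | 2%nat, 2%nat => v
        | 3%nat, 2%nat => 2 * (g - 1) * (f 3%nat / f 0%nat)
        | 3%nat, 3%nat => (2 - g) * v
        | _, _ => 0 end.
Definition B2mat (g : R) (f : vec4) : mat4 := fun i j =>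
  let v := f 2%nat / f 0%nat in
  / 2 * match i, j with
        | 0%nat, 0%nat => v | 1%nat, 1%nat => v | 2%nat, 2%nat => v
        | 2%nat, 3%nat => 4 * (f 3%nat / f 0%nat)
        | 3%nat, 3%nat => (2 - g) * v
        | _, _ => 0 end.

Definition Pmat (g alpha2 : R) : mat4 := fun i j =>
  match i, j with
  | 0%nat, 0%nat => alpha2
  | 1%nat, 1%nat => (g - 1) / 2
  | 2%nat, 2%nat => (g - 1) / 2
  | 3%nat, 3%nat => 1
  | _, _ => 0 end.

Definition mat_eq (A B : mat4) : Prop := forall i j, (i < 4)%nat -> (j < 4)%nat -> A i j = B i j.
Definition symmetric4 (A : mat4) : Prop := mat_eq A (trm A).
Definition posdef4 (A : mat4) : Prop :=
  forall w : vec4, (exists i, (i < 4)%nat /\ w i <> 0) ->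
    0 < w 0%nat * mxv A w 0%nat + w 1%nat * mxv A w 1%nat + w 2%nat * mxv A w 2%nat + w 3%nat * mxv A w 3%nat.

From Stdlib Require Import Reals Lra Lia.
Open Scope R_scope.

(* Where rho > 0 the fluxes are polynomial in sqrt rho, u, v and sqrt p:
   A1 Phi = 1/2 (sqrt rho u, sqrt rho u^2, sqrt rho u v, gamma u sqrt p), and
   symmetrically for B1 Phi.  Differentiating Phi and the fluxes with the product
   rule and the chain rule for the square root, and eliminating the time
   derivatives by the Euler equations, every component of
   Phi_t + (A1 Phi)_x + A2 Phi_x + (B1 Phi)_y + B2 Phi_y = 0 becomes a rational
   identity in sqrt rho, sqrt p, u, v and their spatial derivatives.  For the
   symmetrizer, P is diagonal and the only off-diagonal entries of P A2 and P A1
   are (P A2)_24 = (gamma - 1) phi_4 / phi_1 = (P A1)_42, and likewise for B. *)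

Definition slope (g : R -> R) (s h : R) : R := (g h - g s) / (h - s).
Definition punctured (D : R -> Prop) (s : R) : R -> Prop := fun h => D h /\ h <> s.

Lemma deriv_within_limit D g s l :
  deriv_within D g s l <-> limit1_in (slope g s) (punctured D s) l s.
Proof.
  unfold deriv_within, limit1_in, limit_in, slope, punctured; simpl; unfold R_dist.
  split; intros H eps Heps; destruct (H eps Heps) as (d & Hd & Hsl);
    exists d; (split; [lra | firstorder]).
Qed.

Lemma deriv_within_eq_val D g s l l' :
  deriv_within D g s l -> l = l' -> deriv_within D g s l'.
Proof. now intros H ->. Qed.

Lemma deriv_within_local_ext D g1 g2 s l r : 0 < r ->
  (forall h, D h -> Rabs (h - s) < r -> g1 h = g2 h) -> g1 s = g2 s ->
  deriv_within D g2 s l -> deriv_within D g1 s l.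
Proof.
  intros Hr Hext Hs H eps Heps. destruct (H eps Heps) as (d & Hd & Hsl).
  exists (Rmin d r). split; [now apply Rmin_pos|].
  intros h Dh Hne Hh. rewrite Hext, Hs; auto.
  - apply Hsl; auto. eapply Rlt_le_trans; [exact Hh | apply Rmin_l].
  - eapply Rlt_le_trans; [exact Hh | apply Rmin_r].
Qed.

Lemma deriv_within_const D c s : deriv_within D (fun _ => c) s 0.
Proof.
  apply deriv_within_limit.
  apply limit1_ext with (fun _ => 0); [intros h (_ & Hne); unfold slope; field; lra|].
  apply (limit_free (fun _ => 0) _ 0).
Qed.

Lemma deriv_within_continuous D g s l :
  deriv_within D g s l -> limit1_in g (punctured D s) (g s) s.
Proof.
  intros H%deriv_within_limit.
  apply limit1_ext with (fun h => g s + slope g s h * (h - s)).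
  { intros h (_ & Hne). unfold slope. field. lra. }
  assert (Hlim := limit_plus _ _ _ _ _ _ (limit_free g (punctured D s) s s)
            (limit_mul _ _ _ _ _ _ H (limit_minus _ _ _ _ _ _ (lim_x _ s) (limit_free id _ s s)))).
  unfold id in Hlim. now replace (g s + l * (s - s)) with (g s) in Hlim by ring.
Qed.

Lemma deriv_within_plus D f g s l1 l2 :
  deriv_within D f s l1 -> deriv_within D g s l2 ->
  deriv_within D (fun h => f h + g h) s (l1 + l2).
Proof.
  rewrite !deriv_within_limit. intros Hf Hg.
  apply limit1_ext with (fun h => slope f s h + slope g s h).
  { intros h (_ & Hne). unfold slope. field. lra. }
  now apply limit_plus.
Qed.

Lemma deriv_within_mult D f g s l1 l2 :
  deriv_within D f s l1 -> deriv_within D g s l2 ->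
  deriv_within D (fun h => f h * g h) s (l1 * g s + f s * l2).
Proof.
  intros Hf Hg. assert (Cf := deriv_within_continuous _ _ _ _ Hf).
  rewrite deriv_within_limit in *.
  apply limit1_ext with (fun h => slope f s h * g s + f h * slope g s h).
  { intros h (_ & Hne). unfold slope. field. lra. }
  apply limit_plus; apply limit_mul; auto. apply (limit_free g).
Qed.

(* Caratheodory: the slope of [F] at [g s], extended by [F'] at [g s] itself, is
   continuous there, so it can be composed with [g]. *)
Lemma deriv_within_comp D g F s l F' :
  deriv_within D g s l -> derivable_pt_lim F (g s) F' ->
  deriv_within D (fun h => F (g h)) s (F' * l).
Proof.
  intros Hg HF.
  set (q := fun y => if Req_dec_T y (g s) then F' else slope F (g s) y).
  assert (Hq : limit1_in q (fun _ => True) F' (g s)).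
  { intros eps Heps. destruct (HF eps Heps) as (d & Hd).
    exists d. split; [apply cond_pos|]. intros y (_ & Hy). simpl in *; unfold R_dist in *.
    unfold q. destruct (Req_dec_T y (g s)) as [->|Hne].
    - replace (F' - F') with 0 by ring. now rewrite Rabs_R0.
    - specialize (Hd (y - g s) ltac:(lra) Hy).
      now replace (g s + (y - g s)) with y in Hd by ring. }
  assert (Hqg := limit_comp _ _ _ _ _ _ _ (deriv_within_continuous _ _ _ _ Hg) Hq).
  apply deriv_within_limit in Hg. apply deriv_within_limit.
  apply limit1_ext with (fun h => q (g h) * slope g s h).
  { intros h (_ & Hne). unfold q, slope.
    destruct (Req_dec_T (g h) (g s)) as [E|E].
    - rewrite E. field. lra.
    - field. lra. }
  apply limit_mul; auto.
  eapply limit1_imp; [|exact Hqg]. intros h Hh. split; auto.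
Qed.

Lemma deriv_within_sqrt D f s l : deriv_within D f s l -> 0 < f s ->
  deriv_within D (fun h => sqrt (f h)) s (l / (2 * sqrt (f s))).
Proof.
  intros Hf Hpos. eapply deriv_within_eq_val.
  - apply deriv_within_comp; [exact Hf | now apply derivable_pt_lim_sqrt].
  - unfold Rdiv. ring.
Qed.

(* [Phi rho u v p x y t] is convertible to [Phi_at (rho x y t) (u x y t) (v x y t) (p x y t)]. *)
Definition Phi_at (rho u v p : R) : vec4 := fun i =>
  match i with
  | 0%nat => sqrt rho
  | 1%nat => sqrt rho * u
  | 2%nat => sqrt rho * v
  | _ => sqrt p
  end.

Definition Phi_diff (rho u v p rho' u' v' p' : R) : vec4 := fun i =>
  let r' := rho' / (2 * sqrt rho) in
  match i with
  | 0%nat => r'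
  | 1%nat => r' * u + sqrt rho * u'
  | 2%nat => r' * v + sqrt rho * v'
  | _ => p' / (2 * sqrt p)
  end.

Definition fluxA (g rho u v p : R) : vec4 := fun i =>
  / 2 * match i with
        | 0%nat => sqrt rho * u
        | 1%nat => sqrt rho * (u * u)
        | 2%nat => sqrt rho * (u * v)
        | 3%nat => g * (u * sqrt p)
        | _ => 0
        end.

Definition fluxB (g rho u v p : R) : vec4 := fun i =>
  / 2 * match i with
        | 0%nat => sqrt rho * v
        | 1%nat => sqrt rho * (u * v)
        | 2%nat => sqrt rho * (v * v)
        | 3%nat => g * (v * sqrt p)
        | _ => 0
        end.

Definition fluxA_diff (g rho u v p rho' u' v' p' : R) : vec4 := fun i =>
  let r' := rho' / (2 * sqrt rho) in
  / 2 * match i with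
        | 0%nat => r' * u + sqrt rho * u'
        | 1%nat => r' * (u * u) + sqrt rho * (2 * u * u')
        | 2%nat => r' * (u * v) + sqrt rho * (u' * v + u * v')
        | 3%nat => g * (u' * sqrt p + u * (p' / (2 * sqrt p)))
        | _ => 0
        end.

Definition fluxB_diff (g rho u v p rho' u' v' p' : R) : vec4 := fun i =>
  let r' := rho' / (2 * sqrt rho) in
  / 2 * match i with
        | 0%nat => r' * v + sqrt rho * v'
        | 1%nat => r' * (u * v) + sqrt rho * (u' * v + u * v')
        | 2%nat => r' * (v * v) + sqrt rho * (2 * v * v')
        | 3%nat => g * (v' * sqrt p + v * (p' / (2 * sqrt p)))
        | _ => 0
        end.

Lemma A1mat_Phi_at g rho u v p i : 0 < rho ->
  mxv (A1mat g (Phi_at rho u v p)) (Phi_at rho u v p) i = fluxA g rho u v p i.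
Proof.
  intros Hrho. assert (0 < sqrt rho) by now apply sqrt_lt_R0.
  destruct i as [|[|[|[|i]]]]; unfold mxv, A1mat, fluxA, Phi_at; simpl; field; lra.
Qed.

Lemma B1mat_Phi_at g rho u v p i : 0 < rho ->
  mxv (B1mat g (Phi_at rho u v p)) (Phi_at rho u v p) i = fluxB g rho u v p i.
Proof.
  intros Hrho. assert (0 < sqrt rho) by now apply sqrt_lt_R0.
  destruct i as [|[|[|[|i]]]]; unfold mxv, B1mat, fluxB, Phi_at; simpl; field; lra.
Qed.

Section Curve.

Variables (D : R -> Prop) (s : R) (rho u v p : R -> R) (rho' u' v' p' : R).
Hypotheses (Hrho : deriv_within D rho s rho') (Hu : deriv_within D u s u')
  (Hv : deriv_within D v s v') (Hp : deriv_within D p s p')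
  (Hrho_pos : 0 < rho s) (Hp_pos : 0 < p s).

Local Ltac deriv_by_rules :=
  repeat first [ apply deriv_within_const | apply deriv_within_plus
               | apply deriv_within_mult | apply deriv_within_sqrt | eassumption ].

Local Ltac solve_curve_deriv :=
  assert (0 < sqrt (rho s)) by (now apply sqrt_lt_R0);
  assert (0 < sqrt (p s)) by (now apply sqrt_lt_R0);
  eapply deriv_within_eq_val; [deriv_by_rules | cbv beta zeta; field; lra].

Lemma deriv_within_Phi_at i :
  deriv_within D (fun h => Phi_at (rho h) (u h) (v h) (p h) i) s
    (Phi_diff (rho s) (u s) (v s) (p s) rho' u' v' p' i).
Proof. destruct i as [|[|[|[|i]]]]; unfold Phi_at, Phi_diff; solve_curve_deriv. Qed.

Lemma deriv_within_fluxA g i :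
  deriv_within D (fun h => fluxA g (rho h) (u h) (v h) (p h) i) s
    (fluxA_diff g (rho s) (u s) (v s) (p s) rho' u' v' p' i).
Proof. destruct i as [|[|[|[|i]]]]; unfold fluxA, fluxA_diff; solve_curve_deriv. Qed.

Lemma deriv_within_fluxB g i :
  deriv_within D (fun h => fluxB g (rho h) (u h) (v h) (p h) i) s
    (fluxB_diff g (rho s) (u s) (v s) (p s) rho' u' v' p' i).
Proof. destruct i as [|[|[|[|i]]]]; unfold fluxB, fluxB_diff; solve_curve_deriv. Qed.

Variables (r : R).
Hypotheses (Hr : 0 < r) (Hrho_near : forall h, D h -> Rabs (h - s) < r -> 0 < rho h).

Lemma deriv_within_A1mat_flux g i :
  deriv_within D
    (fun h => mxv (A1mat g (Phi_at (rho h) (u h) (v h) (p h))) (Phi_at (rho h) (u h) (v h) (p h)) i) s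
    (fluxA_diff g (rho s) (u s) (v s) (p s) rho' u' v' p' i).
Proof.
  apply deriv_within_local_ext with (fun h => fluxA g (rho h) (u h) (v h) (p h) i) r;
    auto using A1mat_Phi_at, deriv_within_fluxA.
Qed.

Lemma deriv_within_B1mat_flux g i :
  deriv_within D
    (fun h => mxv (B1mat g (Phi_at (rho h) (u h) (v h) (p h))) (Phi_at (rho h) (u h) (v h) (p h)) i) s
    (fluxB_diff g (rho s) (u s) (v s) (p s) rho' u' v' p' i).
Proof.
  apply deriv_within_local_ext with (fun h => fluxB g (rho h) (u h) (v h) (p h) i) r;
    auto using B1mat_Phi_at, deriv_within_fluxB.
Qed.

End Curve.

Section Balance.

Variables (g rho u v p rho_x rho_y rho_t u_x u_y u_t v_x v_y v_t p_x p_y p_t : R).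
Hypotheses (Hrho : 0 < rho) (Hp : 0 < p)
  (E1 : rho_t + u * rho_x + v * rho_y + rho * (u_x + v_y) = 0)
  (E2 : u_t + u * u_x + v * u_y + p_x / rho = 0)
  (E3 : v_t + u * v_x + v * v_y + p_y / rho = 0)
  (E4 : p_t + u * p_x + v * p_y + g * p * (u_x + v_y) = 0).

Lemma Phi_at_balance i : (i < 4)%nat ->
  Phi_diff rho u v p rho_t u_t v_t p_t i
  + fluxA_diff g rho u v p rho_x u_x v_x p_x i
  + mxv (A2mat g (Phi_at rho u v p)) (Phi_diff rho u v p rho_x u_x v_x p_x) i
  + fluxB_diff g rho u v p rho_y u_y v_y p_y i
  + mxv (B2mat g (Phi_at rho u v p)) (Phi_diff rho u v p rho_y u_y v_y p_y) i = 0.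
Proof.
  intros Hi.
  replace rho_t with (- (u * rho_x + v * rho_y + rho * (u_x + v_y))) by lra.
  replace u_t with (- (u * u_x + v * u_y + p_x / rho)) by lra.
  replace v_t with (- (u * v_x + v * v_y + p_y / rho)) by lra.
  replace p_t with (- (u * p_x + v * p_y + g * p * (u_x + v_y))) by lra.
  assert (Hr : sqrt rho * sqrt rho = rho) by (apply sqrt_sqrt; lra).
  assert (Hq : sqrt p * sqrt p = p) by (apply sqrt_sqrt; lra).
  assert (0 < sqrt rho) by now apply sqrt_lt_R0.
  assert (0 < sqrt p) by now apply sqrt_lt_R0.
  set (r := sqrt rho) in *. set (q := sqrt p) in *.
  destruct i as [|[|[|[|i]]]]; [| | | | lia];
    unfold Phi_diff, fluxA_diff, fluxB_diff, mxv, A2mat, B2mat, Phi_at; cbv beta zeta;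
    fold r q; rewrite <- ?Hr, <- ?Hq; field; lra.
Qed.

End Balance.

Lemma nat_lt4_cases i : (i < 4)%nat -> i = 0%nat \/ i = 1%nat \/ i = 2%nat \/ i = 3%nat.
Proof. lia. Qed.

Lemma Pmat_symmetric g a : symmetric4 (Pmat g a).
Proof.
  intros i j Hi Hj.
  destruct (nat_lt4_cases i Hi) as [ -> | [ -> | [ -> | -> ]]];
    destruct (nat_lt4_cases j Hj) as [ -> | [ -> | [ -> | -> ]]]; reflexivity.
Qed.

Lemma Pmat_quadratic_form g a w :
  w 0%nat * mxv (Pmat g a) w 0%nat + w 1%nat * mxv (Pmat g a) w 1%nat
  + w 2%nat * mxv (Pmat g a) w 2%nat + w 3%nat * mxv (Pmat g a) w 3%nat
  = a * (w 0%nat)² + (g - 1) / 2 * ((w 1%nat)² + (w 2%nat)²) + (w 3%nat)².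
Proof. unfold mxv, Pmat, Rsqr. ring. Qed.

Lemma Pmat_posdef g a : 1 < g -> 0 < a -> posdef4 (Pmat g a).
Proof.
  intros Hg Ha w (i & Hi & Hwi). rewrite Pmat_quadratic_form.
  assert (0 < (w i)²) by now apply Rsqr_pos_lt.
  assert (0 <= (w 0%nat)²) by apply Rle_0_sqr. assert (0 <= (w 1%nat)²) by apply Rle_0_sqr.
  assert (0 <= (w 2%nat)²) by apply Rle_0_sqr. assert (0 <= (w 3%nat)²) by apply Rle_0_sqr.
  destruct (nat_lt4_cases i Hi) as [ -> | [ -> | [ -> | -> ]]]; nra.
Qed.

(* The entries only involve the ratios [f i / f 0], so no hypothesis [f 0 <> 0] is needed. *)
Lemma Pmat_A2mat_transpose g a f :
  mat_eq (mxm (Pmat g a) (A2mat g f)) (trm (mxm (Pmat g a) (A1mat g f))).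
Proof.
  intros i j Hi Hj. unfold trm, mxm, Pmat, A1mat, A2mat.
  destruct (nat_lt4_cases i Hi) as [ -> | [ -> | [ -> | -> ]]];
    destruct (nat_lt4_cases j Hj) as [ -> | [ -> | [ -> | -> ]]]; cbv beta zeta;
    generalize (f 1%nat / f 0%nat) (f 2%nat / f 0%nat) (f 3%nat / f 0%nat); intros; field.
Qed.

Lemma Pmat_B2mat_transpose g a f :
  mat_eq (mxm (Pmat g a) (B2mat g f)) (trm (mxm (Pmat g a) (B1mat g f))).
Proof.
  intros i j Hi Hj. unfold trm, mxm, Pmat, B1mat, B2mat.
  destruct (nat_lt4_cases i Hi) as [ -> | [ -> | [ -> | -> ]]];
    destruct (nat_lt4_cases j Hj) as [ -> | [ -> | [ -> | -> ]]]; cbv beta zeta;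
    generalize (f 1%nat / f 0%nat) (f 2%nat / f 0%nat) (f 3%nat / f 0%nat); intros; field.
Qed.

Lemma C1_on_pd_x Om T F Fx Fy Ft x y t :
  C1_on Om T F Fx Fy Ft -> dom Om T x y t -> pd_x F x y t (Fx x y t).
Proof. intros (HF & _) Hd. apply (HF x y t Hd). Qed.

Lemma C1_on_pd_y Om T F Fx Fy Ft x y t :
  C1_on Om T F Fx Fy Ft -> dom Om T x y t -> pd_y F x y t (Fy x y t).
Proof. intros (HF & _) Hd. apply (HF x y t Hd). Qed.

Lemma C1_on_pd_t Om T F Fx Fy Ft x y t :
  C1_on Om T F Fx Fy Ft -> dom Om T x y t -> pd_t T F x y t (Ft x y t).
Proof. intros (HF & _) Hd. apply (HF x y t Hd). Qed.

Lemma open2_dom_near_x Om T x y t : open2 Om -> dom Om T x y t ->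
  exists r, 0 < r /\ forall h, Rabs (h - x) < r -> dom Om T h y t.
Proof.
  intros HOm (Hxy & Ht). destruct (HOm x y Hxy) as (r & Hr & Hball).
  exists r. split; auto. intros h Hh. split; auto.
  apply Hball; auto. rewrite Rminus_diag, Rabs_R0. exact Hr.
Qed.

Lemma open2_dom_near_y Om T x y t : open2 Om -> dom Om T x y t ->
  exists r, 0 < r /\ forall h, Rabs (h - y) < r -> dom Om T x h t.
Proof.
  intros HOm (Hxy & Ht). destruct (HOm x y Hxy) as (r & Hr & Hball).
  exists r. split; auto. intros h Hh. split; auto.
  apply Hball; auto. rewrite Rminus_diag, Rabs_R0. exact Hr.
Qed.

Section Fields.

Variables (g T : R) (Om : R -> R -> Prop)
  (rho u v p rho_x rho_y rho_t u_x u_y u_t v_x v_y v_t p_x p_y p_t : R -> R -> R -> R).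
Hypotheses (HOm : open2 Om)
  (Hrho : C1_on Om T rho rho_x rho_y rho_t) (Hu : C1_on Om T u u_x u_y u_t)
  (Hv : C1_on Om T v v_x v_y v_t) (Hp : C1_on Om T p p_x p_y p_t)
  (Hrho_pos : forall x y t, dom Om T x y t -> 0 < rho x y t)
  (Hp_pos : forall x y t, dom Om T x y t -> 0 < p x y t).

Variables (x y t : R).
Hypothesis (Hd : dom Om T x y t).

Lemma Phi_pd_t i :
  pd_t T (fun a b c => Phi rho u v p a b c i) x y t
    (Phi_diff (rho x y t) (u x y t) (v x y t) (p x y t)
       (rho_t x y t) (u_t x y t) (v_t x y t) (p_t x y t) i).
Proof.
  apply (deriv_within_Phi_at (Tint T) t (fun s => rho x y s) (fun s => u x y s)
           (fun s => v x y s) (fun s => p x y s));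
    auto.
  all: eapply C1_on_pd_t; eauto.
Qed.

Lemma Phi_pd_x i :
  pd_x (fun a b c => Phi rho u v p a b c i) x y t
    (Phi_diff (rho x y t) (u x y t) (v x y t) (p x y t)
       (rho_x x y t) (u_x x y t) (v_x x y t) (p_x x y t) i).
Proof.
  apply (deriv_within_Phi_at (fun _ => True) x (fun s => rho s y t) (fun s => u s y t)
           (fun s => v s y t) (fun s => p s y t)); auto.
  all: eapply C1_on_pd_x; eauto.
Qed.

Lemma Phi_pd_y i :
  pd_y (fun a b c => Phi rho u v p a b c i) x y t
    (Phi_diff (rho x y t) (u x y t) (v x y t) (p x y t)
       (rho_y x y t) (u_y x y t) (v_y x y t) (p_y x y t) i).
Proof.
  apply (deriv_within_Phi_at (fun _ => True) y (fun s => rho x s t) (fun s => u x s t)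
           (fun s => v x s t) (fun s => p x s t)); auto.
  all: eapply C1_on_pd_y; eauto.
Qed.

Lemma A1mat_flux_pd_x i :
  pd_x (fun a b c => mxv (A1mat g (Phi rho u v p a b c)) (Phi rho u v p a b c) i) x y t
    (fluxA_diff g (rho x y t) (u x y t) (v x y t) (p x y t)
       (rho_x x y t) (u_x x y t) (v_x x y t) (p_x x y t) i).
Proof.
  destruct (open2_dom_near_x Om T x y t HOm Hd) as (r & Hr & Hnear).
  apply (deriv_within_A1mat_flux (fun _ => True) x (fun s => rho s y t) (fun s => u s y t)
           (fun s => v s y t) (fun s => p s y t)) with (r := r); auto.
  all: eapply C1_on_pd_x; eauto.
Qed.

Lemma B1mat_flux_pd_y i :
  pd_y (fun a b c => mxv (B1mat g (Phi rho u v p a b c)) (Phi rho u v p a b c) i) x y t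
    (fluxB_diff g (rho x y t) (u x y t) (v x y t) (p x y t)
       (rho_y x y t) (u_y x y t) (v_y x y t) (p_y x y t) i).
Proof.
  destruct (open2_dom_near_y Om T x y t HOm Hd) as (r & Hr & Hnear).
  apply (deriv_within_B1mat_flux (fun _ => True) y (fun s => rho x s t) (fun s => u x s t)
           (fun s => v x s t) (fun s => p x s t)) with (r := r); auto.
  all: eapply C1_on_pd_y; eauto.
Qed.

End Fields.

Theorem mainTheorem1
  (gamma : R) (Hgamma : 1 < gamma)
  (Om : R -> R -> Prop) (HOm : open2 Om) (T : R) (HT : 0 < T)
  (rho u v p rho_x rho_y rho_t u_x u_y u_t v_x v_y v_t p_x p_y p_t : R -> R -> R -> R)
  (Hrho : C1_on Om T rho rho_x rho_y rho_t)
  (Hu : C1_on Om T u u_x u_y u_t)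
  (Hv : C1_on Om T v v_x v_y v_t)
  (Hp : C1_on Om T p p_x p_y p_t)
  (Hrho_pos : forall x y t, dom Om T x y t -> 0 < rho x y t)
  (Hp_pos : forall x y t, dom Om T x y t -> 0 < p x y t)
  (E1 : forall x y t, dom Om T x y t ->
     rho_t x y t + u x y t * rho_x x y t + v x y t * rho_y x y t
     + rho x y t * (u_x x y t + v_y x y t) = 0)
  (E2 : forall x y t, dom Om T x y t ->
     u_t x y t + u x y t * u_x x y t + v x y t * u_y x y t + p_x x y t / rho x y t = 0)
  (E3 : forall x y t, dom Om T x y t ->
     v_t x y t + u x y t * v_x x y t + v x y t * v_y x y t + p_y x y t / rho x y t = 0)
  (E4 : forall x y t, dom Om T x y t ->
     p_t x y t + u x y t * p_x x y t + v x y t * p_y x y t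
     + gamma * p x y t * (u_x x y t + v_y x y t) = 0) :
  (forall x y t, dom Om T x y t ->
     exists Pt Px Py Fx Fy : nat -> R,
       (forall i, (i < 4)%nat ->
          pd_t T (fun a b c => Phi rho u v p a b c i) x y t (Pt i) /\
          pd_x (fun a b c => Phi rho u v p a b c i) x y t (Px i) /\
          pd_y (fun a b c => Phi rho u v p a b c i) x y t (Py i) /\
          pd_x (fun a b c => mxv (A1mat gamma (Phi rho u v p a b c)) (Phi rho u v p a b c) i)
               x y t (Fx i) /\
          pd_y (fun a b c => mxv (B1mat gamma (Phi rho u v p a b c)) (Phi rho u v p a b c) i)
               x y t (Fy i)) /\
       (forall i, (i < 4)%nat ->
          Pt i + Fx i + mxv (A2mat gamma (Phi rho u v p x y t)) Px i
          + Fy i + mxv (B2mat gamma (Phi rho u v p x y t)) Py i = 0))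
  /\
  (forall alpha2 : R, 0 < alpha2 ->
     symmetric4 (Pmat gamma alpha2) /\ posdef4 (Pmat gamma alpha2) /\
     (forall x y t, dom Om T x y t ->
        mat_eq (mxm (Pmat gamma alpha2) (A2mat gamma (Phi rho u v p x y t)))
               (trm (mxm (Pmat gamma alpha2) (A1mat gamma (Phi rho u v p x y t)))) /\
        mat_eq (mxm (Pmat gamma alpha2) (B2mat gamma (Phi rho u v p x y t)))
               (trm (mxm (Pmat gamma alpha2) (B1mat gamma (Phi rho u v p x y t)))))).
Proof.
  split.
  - intros x y t Hd.
    exists (Phi_diff (rho x y t) (u x y t) (v x y t) (p x y t)
              (rho_t x y t) (u_t x y t) (v_t x y t) (p_t x y t)),
      (Phi_diff (rho x y t) (u x y t) (v x y t) (p x y t)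
         (rho_x x y t) (u_x x y t) (v_x x y t) (p_x x y t)),
      (Phi_diff (rho x y t) (u x y t) (v x y t) (p x y t)
         (rho_y x y t) (u_y x y t) (v_y x y t) (p_y x y t)),
      (fluxA_diff gamma (rho x y t) (u x y t) (v x y t) (p x y t)
         (rho_x x y t) (u_x x y t) (v_x x y t) (p_x x y t)),
      (fluxB_diff gamma (rho x y t) (u x y t) (v x y t) (p x y t)
         (rho_y x y t) (u_y x y t) (v_y x y t) (p_y x y t)).
    split.
    + intros i _. repeat split;
        [eapply Phi_pd_t | eapply Phi_pd_x | eapply Phi_pd_y
        | eapply A1mat_flux_pd_x | eapply B1mat_flux_pd_y]; eauto.
    + intros i Hi. apply Phi_at_balance; auto.
  - intros alpha2 Halpha. split; [|split].
    + apply Pmat_symmetric.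
    + now apply Pmat_posdef.
    + intros x y t _. split; [apply Pmat_A2mat_transpose | apply Pmat_B2mat_transpose].
Qed.
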